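(* Let $X$ be a complete metric space, $\mathcal S=(X,(\phi_j)_{j=0}^{n-1})$ a Matkowski contractive GIFS of degree $m$ with attractor $A_{\mathcal S}$, and $u_{\mathcal Z}$ the fuzzy attractor of the GIFZS $\mathcal Z_{\mathcal S}=(X,(\phi_j)_{j=0}^{n-1},(\rho_j)_{j=0}^{n-1})$ (with $(\rho_j)$ admissible). Then for every nonempty compact $B\subseteq X$ and every $v\in\mathcal F_X^*$: (a) if $\mathcal Z_{\mathcal S}(v,\dots,v)\le v$ then $u_{\mathcal Z}\le v$; (b) if $\bigcup_j\phi_j(B\times\cdots\times B)\subseteq B$ then $A_{\mathcal S}\subseteq B$; (c) if $v\le\mathcal Z_{\mathcal S}(v,\dots,v)$ then $v\le u_{\mathcal Z}$; (d) if $B\subseteq\bigcup_j\phi_j(B\times\cdots\times B)$ then $B\subseteq A_{\mathcal S}$.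
   Context: A fuzzy subset of $X$ is $u:X\to[0,1]$; $u\le v$ means pointwise inequality. $\mathcal F_X^*$: fuzzy subsets that are normal, usc and compactly supported. $X^m$ has the maximum metric $d^m$. For $T:Z\to Y$, $T(u)(y)=\sup\{u(z):T(z)=y\}$ if $y\in T(Z)$, else $0$; $\rho(u)=\rho\circ u$; $(u_0\times\cdots\times u_{m-1})(x_0,\dots,x_{m-1})=\min_iu_i(x_i)$; $\vee$ is pointwise max. A family $(\rho_j)$ of maps $[0,1]\to[0,1]$ is admissible if each is nondecreasing, right continuous, $\rho_j(0)=0$, and $\rho_j(1)=1$ for some $j$. A GIFS of degree $m$ is $(X,(\phi_j))$ with continuous $\phi_j:X^m\to X$; it is Matkowski contractive if each $\phi_j$ satisfies $d(\phi_j(x),\phi_j(y))\le\varphi_j(d^m(x,y))$ for some nondecreasing $\varphi_j:[0,\infty)\to[0,\infty)$ with $\varphi_j^{(k)}(t)\to0$ for all $t>0$. For such $\mathcal S$ on complete $X$, its attractor $A_{\mathcal S}$ is the unique nonempty compact set with $A_{\mathcal S}=\bigcup_j\phi_j(A_{\mathcal S}\times\cdots\times A_{\mathcal S})$. The GIFZS operator is $\mathcal Z_{\mathcal S}(u_0,\dots,u_{m-1})=\bigvee_j\rho_j(\phi_j(u_0\times\cdots\times u_{m-1}))$ and the fuzzy attractor is the unique $u_{\mathcal Z}\in\mathcal F_X^*$ with $\mathcal Z_{\mathcal S}(u_{\mathcal Z},\dots,u_{\mathcal Z})=u_{\mathcal Z}$. *)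

From Stdlib Require Import Reals Lra Lia List Classical ClassicalEpsilon.
Open Scope R_scope.

Definition is_metric {X : Type} (d : X -> X -> R) : Prop :=
  (forall x y, 0 <= d x y) /\
  (forall x y, d x y = 0 <-> x = y) /\
  (forall x y, d x y = d y x) /\
  (forall x y z, d x z <= d x y + d y z).

Definition cauchy_seq {X : Type} (d : X -> X -> R) (s : nat -> X) : Prop :=
  forall eps, 0 < eps -> exists N, forall p q, (N <= p)%nat -> (N <= q)%nat ->
    d (s p) (s q) < eps.

Definition converges_to {X : Type} (d : X -> X -> R) (s : nat -> X) (l : X) : Prop :=
  forall eps, 0 < eps -> exists N, forall p, (N <= p)%nat -> d (s p) l < eps.

Definition mcomplete {X : Type} (d : X -> X -> R) : Prop :=
  forall s, cauchy_seq d s -> exists l, converges_to d s l.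

Definition open_set {X : Type} (d : X -> X -> R) (U : X -> Prop) : Prop :=
  forall x, U x -> exists r, 0 < r /\ forall y, d x y < r -> U y.

Definition mcompact {X : Type} (d : X -> X -> R) (K : X -> Prop) : Prop :=
  forall (I : Type) (U : I -> X -> Prop),
    (forall i, open_set d (U i)) ->
    (forall x, K x -> exists i, U i x) ->
    exists l : list I, forall x, K x -> exists i, In i l /\ U i x.

Definition nonempty {X : Type} (K : X -> Prop) : Prop := exists x, K x.

Definition mclosure {X : Type} (d : X -> X -> R) (S : X -> Prop) (x : X) : Prop :=
  forall eps, 0 < eps -> exists y, S y /\ d x y < eps.

Fixpoint tup (X : Type) (m : nat) : Type :=
  match m with O => unit | S k => (X * tup X k)%type end.

Fixpoint dmax {X : Type} (d : X -> X -> R) (m : nat) : tup X m -> tup X m -> R :=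
  match m with
  | O => fun _ _ => 0
  | S k => fun x y => Rmax (d (fst x) (fst y)) (dmax d k (snd x) (snd y))
  end.

Fixpoint tup_in {X : Type} (B : X -> Prop) (m : nat) : tup X m -> Prop :=
  match m with
  | O => fun _ => True
  | S k => fun t => B (fst t) /\ tup_in B k (snd t)
  end.

Definition fuzzy {X : Type} (u : X -> R) : Prop := forall x, 0 <= u x <= 1.

Definition fle {X : Type} (u v : X -> R) : Prop := forall x, u x <= v x.

Definition normal {X : Type} (u : X -> R) : Prop := exists x, u x = 1.

Definition usc {X : Type} (d : X -> X -> R) (u : X -> R) : Prop :=
  forall x eps, 0 < eps -> exists delta, 0 < delta /\
    forall y, d x y < delta -> u y < u x + eps.

Definition fsupport {X : Type} (d : X -> X -> R) (u : X -> R) : X -> Prop :=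
  mclosure d (fun x => 0 < u x).

Definition FX_star {X : Type} (d : X -> X -> R) (u : X -> R) : Prop :=
  fuzzy u /\ normal u /\ usc d u /\ mcompact d (fsupport d u).

(* supremum of a set of reals (meaningful when nonempty and bounded above) *)
Definition Rsup (E : R -> Prop) : R := epsilon (inhabits 0) (fun l => is_lub E l).

Definition zadeh {Z Y : Type} (T : Z -> Y) (u : Z -> R) (y : Y) : R :=
  match excluded_middle_informative (exists z, T z = y) with
  | left _ => Rsup (fun r => exists z, T z = y /\ r = u z)
  | right _ => 0
  end.

(* diagonal product u × ... × u  (m factors): t ↦ min_i u(t_i)
   (computed as min(u t_0, ..., u t_{m-1}, 1); the trailing 1 is harmless as u <= 1) *)
Fixpoint fprod_diag {X : Type} (u : X -> R) (m : nat) : tup X m -> R :=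
  match m with
  | O => fun _ => 1
  | S k => fun t => Rmin (u (fst t)) (fprod_diag u k (snd t))
  end.

(* finite pointwise maximum  \/_{j<n} f j (as max(0, f 0, ..., f (n-1)); the 0 is harmless for [0,1]-valued f) *)
Fixpoint bigmax {X : Type} (n : nat) (f : nat -> X -> R) (x : X) : R :=
  match n with
  | O => 0
  | S k => Rmax (bigmax k f x) (f k x)
  end.

Definition admissible (n : nat) (rho : nat -> R -> R) : Prop :=
  (forall j, (j < n)%nat ->
     (forall t, 0 <= t <= 1 -> 0 <= rho j t <= 1) /\
     (forall s t, 0 <= s -> s <= t -> t <= 1 -> rho j s <= rho j t) /\
     (forall t, 0 <= t < 1 -> forall eps, 0 < eps -> exists delta, 0 < delta /\
        forall s, t <= s <= 1 -> s < t + delta -> Rabs (rho j s - rho j t) < eps) /\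
     rho j 0 = 0) /\
  (exists j, (j < n)%nat /\ rho j 1 = 1).

Definition continuous_m {X : Type} (d : X -> X -> R) (m : nat) (f : tup X m -> X) : Prop :=
  forall t eps, 0 < eps -> exists delta, 0 < delta /\
    forall s, dmax d m t s < delta -> d (f t) (f s) < eps.

Definition matkowski_contraction {X : Type} (d : X -> X -> R) (m : nat)
  (f : tup X m -> X) : Prop :=
  exists varphi : R -> R,
    (forall t, 0 <= t -> 0 <= varphi t) /\
    (forall s t, 0 <= s -> s <= t -> varphi s <= varphi t) /\
    (forall t, 0 < t -> Un_cv (fun k => Nat.iter k varphi t) 0) /\
    (forall x y, d (f x) (f y) <= varphi (dmax d m x y)).

Definition matkowski_GIFS {X : Type} (d : X -> X -> R) (m n : nat)
  (phi : nat -> tup X m -> X) : Prop :=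
  forall j, (j < n)%nat -> continuous_m d m (phi j) /\ matkowski_contraction d m (phi j).

Definition hutchinson {X : Type} (m n : nat) (phi : nat -> tup X m -> X)
  (B : X -> Prop) (x : X) : Prop :=
  exists j t, (j < n)%nat /\ tup_in B m t /\ phi j t = x.

Definition Zop {X : Type} (m n : nat) (phi : nat -> tup X m -> X)
  (rho : nat -> R -> R) (v : X -> R) : X -> R :=
  bigmax n (fun j x => rho j (zadeh (phi j) (fprod_diag v m) x)).

Definition is_attractor {X : Type} (d : X -> X -> R) (m n : nat)
  (phi : nat -> tup X m -> X) (A : X -> Prop) : Prop :=
  nonempty A /\ mcompact d A /\ (forall x, A x <-> hutchinson m n phi A x).

Definition is_fuzzy_attractor {X : Type} (d : X -> X -> R) (m n : nat)
  (phi : nat -> tup X m -> X) (rho : nat -> R -> R) (u : X -> R) : Prop :=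
  FX_star d u /\ Zop m n phi rho u = u.

(* Everything rests on one contraction argument.  Let sets [S p] be generated by
   the maps [phi j] from sets [S q] (every point of [S p] is some [phi j t] with
   [t] in [(S q)^m]) while the [phi j] map [(T q)^m] into [T p].  If [D] is the
   largest distance from a point of some [S p] to the set [T p], replacing each
   component of [t] by a nearest point of [T q] moves [t] by at most [D], so
   [phi j t] is within [c < D] of [T p]; hence [D = 0] and [S p] is inside [T p].
   Parts (b) and (d) are the case of single compact sets.  For (a) and (c) take
   the cuts [{x | p <= w x}] of the sub- and super-solution; a point of a cut of
   [Zop w] lies over a point of a cut of [w] because the Zadeh suprema are
   attained, the maps being continuous and [w] upper semicontinuous with compact
   support.  Completeness and [1 <= m] are only needed for the existence of the
   attractors, which is assumed here. *)

From Pilot Require Import Defs.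
From Stdlib Require Import Reals Lra Lia List Classical ClassicalEpsilon.
Open Scope R_scope.

Section Metric.
Context {X : Type} (d : X -> X -> R) (Hd : is_metric d).

Lemma dist_self x : d x x = 0.
Proof. apply (proj1 (proj2 Hd)); reflexivity. Qed.

Lemma dist_sym x y : d x y = d y x.
Proof. apply (proj1 (proj2 (proj2 Hd))). Qed.

Lemma dmax_nonneg m x y : 0 <= dmax d m x y.
Proof.
  induction m as [|m IH]; simpl; [lra|].
  eapply Rle_trans; [apply (proj1 Hd) | apply Rmax_l].
Qed.

Lemma dmax_sym m x y : dmax d m x y = dmax d m y x.
Proof.
  destruct Hd as (_ & _ & Hsym & _).
  induction m as [|m IH]; simpl; [reflexivity|]. now rewrite Hsym, IH.
Qed.

Lemma ball_open c r : Defs.open_set d (fun x => d c x < r).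
Proof.
  destruct Hd as (_ & _ & _ & Htri). intros x Hx. exists (r - d c x). split; [lra|].
  intros y Hy. specialize (Htri c x y). lra.
Qed.

End Metric.

Lemma tup_in_mono {X : Type} (P Q : X -> Prop) m :
  (forall x, P x -> Q x) -> forall t, tup_in P m t -> tup_in Q m t.
Proof.
  intros HPQ. induction m as [|m IH]; simpl; [auto|]. intros t [H1 H2]. split; auto.
Qed.

Lemma inv_INR_succ_pos k : 0 < / (INR k + 1).
Proof. apply Rinv_0_lt_compat. pose proof (pos_INR k). lra. Qed.

Lemma inv_INR_succ_le k k' : (k <= k')%nat -> / (INR k' + 1) <= / (INR k + 1).
Proof.
  intros Hk. apply le_INR in Hk. apply Rinv_le_contravar; [pose proof (pos_INR k)|]; lra.
Qed.

Lemma exists_inv_INR_succ_lt eps : 0 < eps -> exists k, / (INR k + 1) < eps.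
Proof.
  intros Heps. destruct (archimed_cor1 eps Heps) as [k [Hk Hk0]]. exists k.
  eapply Rle_lt_trans; [|exact Hk].
  apply Rinv_le_contravar; [apply lt_0_INR; lia|lra].
Qed.

Lemma fold_max_ge (l : list nat) k : In k l -> (k <= fold_right max 0 l)%nat.
Proof.
  induction l as [|a l IH]; simpl; [tauto|]. intros [<-|Hk]; [lia|]. specialize (IH Hk). lia.
Qed.

Lemma lub_approx (E : R -> Prop) z eps :
  is_lub E z -> 0 < eps -> exists r, E r /\ z - eps < r.
Proof.
  intros [_ Hleast] Heps. apply NNPP. intros Hno.
  assert (z <= z - eps); [|lra].
  apply Hleast. intros r Er. apply Rnot_lt_le. intros Hr. apply Hno. eauto.
Qed.

Section Compact.
Context {X : Type} (d : X -> X -> R) (Hd : is_metric d).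

Lemma compact_bounded K : mcompact d K -> forall c, exists M, forall x, K x -> d c x <= M.
Proof.
  intros HK c.
  destruct (HK nat (fun k x => d c x < INR k)) as [l Hl].
  - intros k. now apply ball_open.
  - intros x _. destruct (INR_unbounded (d c x)) as [k Hk]. exists k. lra.
  - exists (INR (fold_right max 0%nat l)). intros x Hx.
    destruct (Hl x Hx) as [k [Hk Hxk]]. apply fold_max_ge, le_INR in Hk. lra.
Qed.

Lemma compact_dist_bounded K1 K2 :
  mcompact d K1 -> mcompact d K2 -> nonempty K1 ->
  exists M, forall x a, K1 x -> K2 a -> d x a <= M.
Proof.
  intros HK1 HK2 [c _].
  destruct (compact_bounded K1 HK1 c) as [M1 HM1].
  destruct (compact_bounded K2 HK2 c) as [M2 HM2].
  exists (M1 + M2). intros x a Hx Ha. pose proof (HM1 x Hx). pose proof (HM2 a Ha).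
  destruct Hd as (_ & _ & Hsym & Htri). specialize (Htri x c a).
  rewrite (Hsym x c) in Htri. lra.
Qed.

Lemma compact_closed_subset K S :
  mcompact d K -> (forall x, S x -> K x) -> Defs.open_set d (fun x => ~ S x) -> mcompact d S.
Proof.
  intros HK HSK HS I U HU Hcov.
  destruct (HK (option I) (fun o x => match o with Some i => U i x | None => ~ S x end))
    as [l Hl].
  - intros [i|]; auto.
  - intros x _. destruct (classic (S x)) as [Sx|nSx].
    + destruct (Hcov x Sx) as [i Hi]. now exists (Some i).
    + now exists None.
  - exists (flat_map (fun o => match o with Some i => i :: nil | None => nil end) l).
    intros x Sx. destruct (Hl x (HSK x Sx)) as [[i|] [Hi Hxi]]; [|contradiction].
    exists i. split; [|exact Hxi]. apply in_flat_map. exists (Some i). simpl; auto.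
Qed.

(* The infimum [- L] of the distances from [y] is attained: otherwise the sets
   [{z | - L + 1/(k+1) < d y z}] would be an open cover without finite subcover. *)
Lemma compact_nearest_point S :
  mcompact d S -> nonempty S -> forall y, exists a, S a /\ forall b, S b -> d y a <= d y b.
Proof.
  intros HS [s0 Hs0] y. destruct Hd as (Hnn & _ & Hsym & Htri).
  set (E := fun r => exists b, S b /\ r = - d y b).
  destruct (completeness E) as [L [HL1 HL2]].
  - exists 0. intros r [b [_ ->]]. specialize (Hnn y b). lra.
  - exists (- d y s0). now exists s0.
  - apply NNPP; intros Hno.
    assert (Hgt : forall a, S a -> - L < d y a).
    { intros a Sa. assert (Ha : - d y a <= L) by (apply HL1; now exists a).
      destruct (Rle_lt_or_eq_dec _ _ Ha) as [|Heq]; [lra|]. exfalso; apply Hno.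
      exists a. split; [exact Sa|]. intros b Sb.
      assert (- d y b <= L) by (apply HL1; now exists b). lra. }
    destruct (HS nat (fun k z => - L + / (INR k + 1) < d y z)) as [l Hl].
    + intros k z Hz. exists (d y z - (- L + / (INR k + 1))). split; [lra|].
      intros w Hw. specialize (Htri y w z). rewrite (Hsym w z) in Htri. lra.
    + intros a Sa. specialize (Hgt a Sa).
      destruct (exists_inv_INR_succ_lt (d y a - - L)) as [k Hk]; [lra|]. exists k. lra.
    + set (K := fold_right max 0%nat l).
      assert (L <= L - / (INR K + 1)); [|pose proof (inv_INR_succ_pos K); lra].
      apply HL2. intros r [b [Sb ->]]. destruct (Hl b Sb) as [k [Hk Hbk]].
      pose proof (inv_INR_succ_le k K (fold_max_ge l k Hk)). lra.
Qed.

Definition strict_incr (s : nat -> nat) : Prop := forall k, (s k < s (S k))%nat.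

Lemma strict_incr_lt s : strict_incr s -> forall a b, (a < b)%nat -> (s a < s b)%nat.
Proof.
  intros Hs a b Hab. induction b as [|b IH]; [lia|].
  destruct (Nat.eq_dec a b) as [->|Hne]; [apply Hs|]. specialize (IH ltac:(lia)).
  specialize (Hs b). lia.
Qed.

Lemma strict_incr_ge s : strict_incr s -> forall k, (k <= s k)%nat.
Proof. intros Hs k. induction k as [|k IH]; [lia|]. specialize (Hs k). lia. Qed.

(* If no point were a cluster point, each point would have a ball that the
   sequence eventually avoids; finitely many of them cover [K], a contradiction. *)
Lemma compact_cluster_point K (a : nat -> X) :
  mcompact d K -> (forall k, K (a k)) ->
  exists c, forall eps N, 0 < eps -> exists k, (N <= k)%nat /\ d c (a k) < eps.
Proof.
  intros HK Ha. apply NNPP; intros Hno.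
  set (I := {p : X * R | 0 < snd p /\
              exists N, forall k, (N <= k)%nat -> snd p <= d (fst p) (a k)}).
  destruct (HK I (fun p x => d (fst (proj1_sig p)) x < snd (proj1_sig p))) as [l Hl].
  - intros p. now apply ball_open.
  - intros c _. apply NNPP; intros Hc. apply Hno. exists c. intros eps N Heps.
    apply NNPP; intros Hfar. apply Hc.
    assert (HN : forall k, (N <= k)%nat -> eps <= d c (a k)).
    { intros k Hk. apply Rnot_lt_le. intros Hlt. apply Hfar. eauto. }
    exists (exist _ (c, eps) (conj Heps (ex_intro _ N HN))). simpl.
    now rewrite (dist_self d Hd).
  - assert (Hfar : exists N, forall p, In p l -> forall k, (N <= k)%nat ->
                     snd (proj1_sig p) <= d (fst (proj1_sig p)) (a k)).
    { clear Hl. induction l as [|p0 l IH]; [exists 0%nat; intros p []|].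
      destruct IH as [N1 HN1]. destruct (proj2 (proj2_sig p0)) as [N2 HN2].
      exists (max N1 N2). intros p [<-|Hp] k Hk; [apply HN2; lia|apply HN1; [exact Hp|lia]]. }
    destruct Hfar as [N HN]. destruct (Hl (a N) (Ha N)) as [p [Hp Hpa]].
    specialize (HN p Hp N (le_n N)). lra.
Qed.

Fixpoint subseq_from (g : nat -> nat -> nat) (k : nat) : nat :=
  match k with
  | O => g 0%nat 0%nat
  | S k' => g (S (subseq_from g k')) (S k')
  end.

Lemma compact_subseq_converges K (a : nat -> X) :
  mcompact d K -> (forall k, K (a k)) ->
  exists s, strict_incr s /\ exists c, converges_to d (fun k => a (s k)) c.
Proof.
  intros HK Ha. destruct (compact_cluster_point K a HK Ha) as [c Hc].
  destruct (choice (fun (Nk : nat * nat) i =>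
              (fst Nk <= i)%nat /\ d c (a i) < / (INR (snd Nk) + 1))) as [g Hg].
  { intros [N k]. apply Hc, inv_INR_succ_pos. }
  set (s := subseq_from (fun N k => g (N, k))).
  exists s. split.
  - intros k. exact (proj1 (Hg (S (s k), S k))).
  - exists c. intros eps Heps. destruct (exists_inv_INR_succ_lt eps Heps) as [N HN].
    exists N. intros k Hk. rewrite (dist_sym d Hd).
    assert (Hclose : d c (a (s k)) < / (INR k + 1)).
    { destruct k as [|k]; [exact (proj2 (Hg (0, 0)%nat))|exact (proj2 (Hg (_, S k)))]. }
    pose proof (inv_INR_succ_le N k Hk). lra.
Qed.

Lemma compact_tup_subseq_converges K m (a : nat -> tup X m) :
  mcompact d K -> (forall k, tup_in K m (a k)) ->
  exists s, strict_incr s /\ exists c, converges_to (dmax d m) (fun k => a (s k)) c.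
Proof.
  intros HK. revert a. induction m as [|m IH]; intros a Ha.
  - exists (fun k => k). split; [intros k; lia|].
    exists tt. intros eps Heps. exists 0%nat. intros; simpl; lra.
  - destruct (compact_subseq_converges K (fun k => fst (a k)) HK (fun k => proj1 (Ha k)))
      as [s1 [Hs1 [c1 Hc1]]].
    destruct (IH (fun k => snd (a (s1 k))) (fun k => proj2 (Ha (s1 k))))
      as [s2 [Hs2 [c2 Hc2]]].
    exists (fun k => s1 (s2 k)). split; [intros k; now apply strict_incr_lt|].
    exists (c1, c2). intros eps Heps.
    destruct (Hc1 eps Heps) as [N1 HN1]. destruct (Hc2 eps Heps) as [N2 HN2].
    exists (max N1 N2). intros k Hk. simpl. apply Rmax_lub_lt.
    + apply HN1. pose proof (strict_incr_ge s2 Hs2 k). lia.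
    + apply HN2. lia.
Qed.

End Compact.

Lemma matkowski_lt (varphi : R -> R) :
  (forall s t, 0 <= s -> s <= t -> varphi s <= varphi t) ->
  (forall t, 0 < t -> Un_cv (fun k => Nat.iter k varphi t) 0) ->
  forall t, 0 < t -> varphi t < t.
Proof.
  intros Hmono Hcv t Ht. apply Rnot_le_lt. intros Hge.
  assert (Hiter : forall k, t <= Nat.iter k varphi t).
  { induction k as [|k IH]; simpl; [lra|].
    eapply Rle_trans; [exact Hge|]. apply Hmono; lra. }
  destruct (Hcv t Ht t Ht) as [N HN]. specialize (HN N (le_n N)).
  unfold Rdist in HN. rewrite Rminus_0_r in HN.
  pose proof (Rle_abs (Nat.iter N varphi t)). specialize (Hiter N). lra.
Qed.

Definition uniformly_contractive {X : Type} (d : X -> X -> R) (m n : nat)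
  (phi : nat -> tup X m -> X) : Prop :=
  forall D, 0 < D -> exists c, c < D /\
    forall j, (j < n)%nat -> forall x y, dmax d m x y <= D -> d (phi j x) (phi j y) <= c.

Lemma matkowski_GIFS_uniformly_contractive {X : Type} (d : X -> X -> R) m n phi :
  is_metric d -> matkowski_GIFS d m n phi -> uniformly_contractive d m n phi.
Proof.
  intros Hd HG D HD.
  enough (H : forall k, (k <= n)%nat -> exists c, c < D /\
    forall j, (j < k)%nat -> forall x y, dmax d m x y <= D -> d (phi j x) (phi j y) <= c)
    by exact (H n (le_n n)).
  induction k as [|k IH]; intros Hk.
  - exists 0. split; [exact HD|]. intros j Hj; lia.
  - destruct IH as [c [Hc Hcj]]; [lia|].
    destruct (HG k ltac:(lia)) as [_ (varphi & _ & Hmono & Hcv & Hcontr)].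
    exists (Rmax c (varphi D)). split.
    + apply Rmax_lub_lt; [exact Hc|]. now apply matkowski_lt.
    + intros j Hj x y Hxy. destruct (Nat.eq_dec j k) as [->|Hne].
      * eapply Rle_trans; [apply Hcontr|]. eapply Rle_trans; [|apply Rmax_r].
        apply Hmono; [apply dmax_nonneg|]; assumption.
      * eapply Rle_trans; [apply Hcj; [lia|exact Hxy]|apply Rmax_l].
Qed.

Lemma tup_in_approx {X : Type} (d : X -> X -> R) m (P Q : X -> Prop) D :
  0 <= D -> (forall y, P y -> exists a, Q a /\ d y a <= D) ->
  forall t, tup_in P m t -> exists s, tup_in Q m s /\ dmax d m t s <= D.
Proof.
  intros HD Happrox. induction m as [|m IH]; simpl; intros t Ht.
  - exists tt. split; [exact I|exact HD].
  - destruct Ht as [H1 H2]. destruct (Happrox _ H1) as [a [Qa Ha]].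
    destruct (IH _ H2) as [s [Qs Hs]].
    exists (a, s). simpl. split; [split; assumption|]. now apply Rmax_lub.
Qed.

Lemma uniformly_contractive_incl {X : Type} (d : X -> X -> R) m n phi
  (P : Type) (S T : P -> X -> Prop) :
  is_metric d -> uniformly_contractive d m n phi ->
  (forall p x, S p x -> exists j t q, (j < n)%nat /\ phi j t = x /\ tup_in (S q) m t /\
      (forall s, tup_in (T q) m s -> T p (phi j s))) ->
  (forall p x, S p x -> forall y, exists a, T p a /\ forall b, T p b -> d y a <= d y b) ->
  (exists M, forall p x a, S p x -> T p a -> d x a <= M) ->
  forall p x, S p x -> T p x.
Proof.
  intros Hd Hc Hstep Hnear [M HM] p x Hx.
  destruct (Hnear p x Hx x) as [a [Ta Ha]].
  set (E := fun r => exists p x a, S p x /\ T p a /\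
              (forall b, T p b -> d x a <= d x b) /\ r = d x a).
  destruct (completeness E) as [D [HD1 HD2]].
  - exists M. intros r (p' & x' & a' & Hx' & Ha' & _ & ->). eauto.
  - exists (d x a), p, x, a. auto.
  - assert (Hgap : forall q y, S q y -> exists a, T q a /\ d y a <= D).
    { intros q y Hy. destruct (Hnear q y Hy y) as [b [Tb Hb]].
      exists b. split; [exact Tb|]. apply HD1. exists q, y, b. auto. }
    assert (HD0 : D <= 0).
    { apply Rnot_lt_le. intros HDpos. destruct (Hc D HDpos) as [c [HcD Hcontr]].
      assert (D <= c); [|lra].
      apply HD2. intros r (p' & x' & a' & Hx' & Ta' & Ha' & ->).
      destruct (Hstep p' x' Hx') as (j & t & q & Hj & <- & Ht & HT).
      destruct (tup_in_approx d m (S q) (T q) D ltac:(lra) (Hgap q) t Ht)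
        as [s [Hs Hts]].
      eapply Rle_trans; [apply Ha', HT, Hs|]. now apply Hcontr. }
    assert (Hxa : d x a = 0).
    { pose proof (proj1 Hd x a). assert (d x a <= D) by (apply HD1; exists p, x, a; auto). lra. }
    apply (proj1 (proj2 Hd)) in Hxa. now subst.
Qed.

Lemma Rsup_is_lub (E : R -> Prop) : (exists r, E r) -> bound E -> is_lub E (Rsup E).
Proof.
  intros Hne Hb. unfold Rsup. apply epsilon_spec.
  destruct (completeness E Hb Hne) as [l Hl]. eauto.
Qed.

Section Zadeh.
Context {Z Y : Type} (T : Z -> Y) (w : Z -> R) (Hw : forall z, 0 <= w z <= 1).

Lemma zadeh_is_lub z0 : is_lub (fun r => exists z, T z = T z0 /\ r = w z) (zadeh T w (T z0)).
Proof.
  unfold zadeh. destruct excluded_middle_informative as [_|Hno]; [|exfalso; eauto].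
  apply Rsup_is_lub; [eauto|]. exists 1. intros r [z [_ ->]]. apply Hw.
Qed.

Lemma zadeh_ge z0 : w z0 <= zadeh T w (T z0).
Proof. apply zadeh_is_lub. eauto. Qed.

Lemma zadeh_range y : 0 <= zadeh T w y <= 1.
Proof.
  unfold zadeh. destruct excluded_middle_informative as [[z0 <-]|_]; [|lra].
  pose proof (zadeh_is_lub z0) as [Hub Hleast]. unfold zadeh in Hub, Hleast.
  destruct excluded_middle_informative as [_|Hno]; [|exfalso; eauto]. split.
  - eapply Rle_trans; [apply Hw|]. apply Hub. eauto.
  - apply Hleast. intros r [z [_ ->]]. apply Hw.
Qed.

Lemma zadeh_pos_is_lub y :
  0 < zadeh T w y -> is_lub (fun r => exists z, T z = y /\ r = w z) (zadeh T w y).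
Proof.
  intros Hpos. unfold zadeh in Hpos. destruct excluded_middle_informative as [[z0 <-]|_];
    [apply zadeh_is_lub|lra].
Qed.

End Zadeh.

Definition cut {X : Type} (w : X -> R) (p : R) (x : X) : Prop := p <= w x.

Section Product.
Context {X : Type} (w : X -> R).

Lemma fprod_range m : fuzzy w -> forall t, 0 <= fprod_diag w m t <= 1.
Proof.
  intros Hw. induction m as [|m IH]; intros t; simpl; [lra|].
  destruct t as [t1 t2]. simpl. specialize (IH t2). specialize (Hw t1). split.
  - apply Rmin_glb; lra.
  - eapply Rle_trans; [apply Rmin_r|lra].
Qed.

Lemma fprod_ge_cut m z t : z <= fprod_diag w m t -> tup_in (cut w z) m t.
Proof.
  induction m as [|m IH]; simpl; intros Hz; [exact I|]. split.
  - eapply Rle_trans; [exact Hz|apply Rmin_l].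
  - apply IH. eapply Rle_trans; [exact Hz|apply Rmin_r].
Qed.

Lemma cut_le_fprod m z t : z <= 1 -> tup_in (cut w z) m t -> z <= fprod_diag w m t.
Proof.
  intros Hz1. induction m as [|m IH]; simpl; [auto|]. intros [H1 H2].
  apply Rmin_glb; [exact H1|now apply IH].
Qed.

Lemma fprod_usc (d : X -> X -> R) m : usc d w -> usc (dmax d m) (fprod_diag w m).
Proof.
  intros Hw. induction m as [|m IH]; simpl; intros t eps Heps.
  - exists 1. split; intros; lra.
  - destruct t as [t1 t2]. destruct (Hw t1 eps Heps) as [d1 [Hd1 H1]].
    destruct (IH t2 eps Heps) as [d2 [Hd2 H2]].
    exists (Rmin d1 d2). split; [now apply Rmin_glb_lt|]. intros [s1 s2] Hs. simpl in *.
    assert (Hs1 : d t1 s1 < d1).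
    { eapply Rle_lt_trans; [apply Rmax_l|]. eapply Rlt_le_trans; [exact Hs|apply Rmin_l]. }
    assert (Hs2 : dmax d m t2 s2 < d2).
    { eapply Rle_lt_trans; [apply Rmax_r|]. eapply Rlt_le_trans; [exact Hs|apply Rmin_r]. }
    specialize (H1 _ Hs1). specialize (H2 _ Hs2).
    pose proof (Rmin_l (w s1) (fprod_diag w m s2)).
    pose proof (Rmin_r (w s1) (fprod_diag w m s2)).
    unfold Rmin at 2. destruct Rle_dec; lra.
Qed.

End Product.

Lemma pos_in_support {X : Type} (d : X -> X -> R) (w : X -> R) y :
  is_metric d -> 0 < w y -> fsupport d w y.
Proof. intros Hd Hy eps Heps. exists y. rewrite (dist_self d Hd). auto. Qed.

Lemma continuous_m_limit {X : Type} (d : X -> X -> R) m (psi : tup X m -> X)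
  (a : nat -> tup X m) c x :
  is_metric d -> continuous_m d m psi -> converges_to (dmax d m) a c ->
  (forall k, psi (a k) = x) -> psi c = x.
Proof.
  intros Hd Hpsi Ha Hx. apply (proj1 (proj2 Hd)). apply NNPP. intros Hne.
  assert (Hpos : 0 < d (psi c) x) by (pose proof (proj1 Hd (psi c) x); lra).
  destruct (Hpsi c _ Hpos) as [delta [Hdelta Hclose]].
  destruct (Ha delta Hdelta) as [N HN]. specialize (HN N (le_n N)).
  rewrite (dmax_sym d Hd) in HN. specialize (Hclose _ HN). rewrite Hx in Hclose. lra.
Qed.

Lemma usc_limit_ge {X : Type} (d : X -> X -> R) (g : X -> R) (a : nat -> X) c z :
  (forall x y, d x y = d y x) -> usc d g -> converges_to d a c ->
  (forall eps, 0 < eps -> exists N, forall k, (N <= k)%nat -> z - eps < g (a k)) ->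
  z <= g c.
Proof.
  intros Hsym Hg Ha Hz. apply Rnot_lt_le. intros Hlt.
  set (eps := (z - g c) / 2).
  destruct (Hg c eps ltac:(unfold eps; lra)) as [delta [Hdelta Hclose]].
  destruct (Ha delta Hdelta) as [N1 HN1]. destruct (Hz eps ltac:(unfold eps; lra)) as [N2 HN2].
  specialize (HN1 (max N1 N2) ltac:(lia)). specialize (HN2 (max N1 N2) ltac:(lia)).
  rewrite Hsym in HN1. specialize (Hclose _ HN1). unfold eps in *. lra.
Qed.

(* Near-maximisers are taken with value above [z/2], so that they stay in the
   compact set [(supp w)^m] and have a convergent subsequence. *)
Lemma zadeh_fprod_attained {X : Type} (d : X -> X -> R) (w : X -> R) m
  (psi : tup X m -> X) x :
  is_metric d -> fuzzy w -> usc d w -> mcompact d (fsupport d w) -> continuous_m d m psi ->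
  0 < zadeh psi (fprod_diag w m) x ->
  exists t, psi t = x /\ zadeh psi (fprod_diag w m) x <= fprod_diag w m t.
Proof.
  intros Hd Hw Husc HK Hpsi Hpos. set (z := zadeh psi (fprod_diag w m) x) in *.
  pose proof (zadeh_pos_is_lub psi _ (fprod_range w m Hw) x Hpos) as Hlub. fold z in Hlub.
  destruct (choice (fun k t => psi t = x /\
              z - Rmin (z / 2) (/ (INR k + 1)) < fprod_diag w m t)) as [a Ha].
  { intros k. destruct (lub_approx _ z (Rmin (z / 2) (/ (INR k + 1))) Hlub) as [r [[t [Ht ->]] Hr]].
    - apply Rmin_glb_lt; [lra|apply inv_INR_succ_pos].
    - eauto. }
  assert (Hsupp : forall k, tup_in (fsupport d w) m (a k)).
  { intros k. apply tup_in_mono with (P := cut w (z / 2)).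
    - intros y Hy. apply (pos_in_support d w y Hd). unfold cut in Hy. lra.
    - apply fprod_ge_cut. pose proof (Rmin_l (z / 2) (/ (INR k + 1))).
      pose proof (proj2 (Ha k)). lra. }
  destruct (compact_tup_subseq_converges d Hd _ m a HK Hsupp) as [s [Hs [c Hc]]].
  exists c. split.
  - apply (continuous_m_limit d m psi _ c x Hd Hpsi Hc). intros k. apply Ha.
  - apply (usc_limit_ge _ _ _ c z (dmax_sym d Hd m) (fprod_usc w d m Husc) Hc).
    intros eps Heps. destruct (exists_inv_INR_succ_lt eps Heps) as [N HN].
    exists N. intros k Hk. pose proof (proj2 (Ha (s k))).
    pose proof (Rmin_r (z / 2) (/ (INR (s k) + 1))).
    pose proof (inv_INR_succ_le N (s k) ltac:(pose proof (strict_incr_ge s Hs k); lia)).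
    lra.
Qed.

Lemma bigmax_ge {X : Type} k (f : nat -> X -> R) x j : (j < k)%nat -> f j x <= bigmax k f x.
Proof.
  induction k as [|k IH]; simpl; intros Hj; [lia|].
  destruct (Nat.eq_dec j k) as [->|Hne]; [apply Rmax_r|].
  eapply Rle_trans; [apply IH; lia|apply Rmax_l].
Qed.

Lemma le_bigmax_exists {X : Type} k (f : nat -> X -> R) x a :
  0 < a -> a <= bigmax k f x -> exists j, (j < k)%nat /\ a <= f j x.
Proof.
  intros Ha. induction k as [|k IH]; simpl; intros Hk; [lra|].
  unfold Rmax in Hk. destruct Rle_dec.
  - exists k. split; [lia|exact Hk].
  - destruct (IH Hk) as [j [Hj Hjx]]. exists j. split; [lia|exact Hjx].
Qed.

Lemma cut_compact {X : Type} (d : X -> X -> R) (w : X -> R) p :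
  is_metric d -> usc d w -> mcompact d (fsupport d w) -> 0 < p -> mcompact d (cut w p).
Proof.
  intros Hd Husc HK Hp. apply (compact_closed_subset d (fsupport d w)); [exact HK| |].
  - intros x Hx. apply (pos_in_support d w x Hd). unfold cut in Hx. lra.
  - intros x Hx. unfold cut in Hx.
    destruct (Husc x (p - w x) ltac:(lra)) as [r [Hr Hball]].
    exists r. split; [exact Hr|]. intros y Hy. unfold cut. specialize (Hball y Hy). lra.
Qed.

Section Cuts.
Context {X : Type} (d : X -> X -> R) (m n : nat) (phi : nat -> tup X m -> X)
  (rho : nat -> R -> R) (Hd : is_metric d) (HG : matkowski_GIFS d m n phi)
  (Hrho : admissible n rho).

Lemma Zop_cut_preimage w p x :
  FX_star d w -> 0 < p -> cut (Zop m n phi rho w) p x ->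
  exists j z t, (j < n)%nat /\ 0 < z <= 1 /\ p <= rho j z /\
    phi j t = x /\ tup_in (cut w z) m t.
Proof.
  intros (Hw & _ & Husc & HK) Hp Hx.
  destruct (le_bigmax_exists _ _ _ _ Hp Hx) as [j [Hj Hpj]].
  destruct (proj1 Hrho j Hj) as (_ & _ & _ & Hrho0).
  set (z := zadeh (phi j) (fprod_diag w m) x) in *.
  pose proof (zadeh_range (phi j) _ (fprod_range w m Hw) x) as Hz. fold z in Hz.
  assert (Hzpos : 0 < z).
  { destruct (proj1 Hz) as [|Hz0]; [assumption|]. rewrite <- Hz0, Hrho0 in Hpj. lra. }
  destruct (zadeh_fprod_attained d w m (phi j) x Hd Hw Husc HK (proj1 (HG j Hj)) Hzpos)
    as [t [Ht Hzt]].
  exists j, z, t. repeat split; try assumption; try lra. now apply fprod_ge_cut.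
Qed.

Lemma Zop_cut_image w j z p s :
  fuzzy w -> fle (Zop m n phi rho w) w -> (j < n)%nat -> 0 < z <= 1 -> p <= rho j z ->
  tup_in (cut w z) m s -> cut w p (phi j s).
Proof.
  intros Hw HZ Hj Hz Hp Hs. unfold cut. eapply Rle_trans; [|apply HZ].
  eapply Rle_trans; [|apply (bigmax_ge n _ _ j Hj)]. cbv beta.
  eapply Rle_trans; [exact Hp|]. apply (proj1 Hrho j Hj); [lra| |].
  - eapply Rle_trans; [apply (cut_le_fprod w m z s (proj2 Hz) Hs)|].
    apply zadeh_ge, fprod_range, Hw.
  - apply zadeh_range, fprod_range, Hw.
Qed.

Lemma fuzzy_sub_super_le w1 w2 :
  FX_star d w1 -> FX_star d w2 ->
  fle w1 (Zop m n phi rho w1) -> fle (Zop m n phi rho w2) w2 -> fle w1 w2.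
Proof.
  intros Hw1 Hw2 HZ1 HZ2.
  pose proof Hw1 as (Hf1 & [x1 Hx1] & _ & HK1). pose proof Hw2 as (Hf2 & [x2 Hx2] & Husc2 & HK2).
  assert (Hincl : forall p x, 0 < p <= 1 /\ cut w1 p x -> cut w2 p x).
  { apply (uniformly_contractive_incl d m n phi R);
      [exact Hd|now apply matkowski_GIFS_uniformly_contractive| | |].
    - intros p x [Hp Hx].
      destruct (Zop_cut_preimage w1 p x Hw1 (proj1 Hp) (Rle_trans _ _ _ Hx (HZ1 x)))
        as (j & z & t & Hj & Hz & Hpz & Ht & Htz).
      exists j, t, z. repeat split; try assumption.
      + apply tup_in_mono with (P := cut w1 z); [|exact Htz]. intros y Hy. now repeat split.
      + intros s Hs. now apply (Zop_cut_image w2 j z).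
    - intros p x [Hp _] y. apply (compact_nearest_point d Hd).
      + now apply cut_compact.
      + exists x2. unfold cut. lra.
    - destruct (compact_dist_bounded d Hd _ _ HK1 HK2) as [M HM].
      { exists x1. apply (pos_in_support d w1 x1 Hd). lra. }
      exists M. intros p x a [Hp Hx] Ha. unfold cut in Hx, Ha.
      apply HM; apply pos_in_support; auto; lra. }
  intros x. destruct (Rle_or_lt (w1 x) 0) as [Hx|Hx]; [pose proof (Hf2 x); lra|].
  apply (Hincl (w1 x) x). specialize (Hf1 x). unfold cut. repeat split; lra.
Qed.

End Cuts.

Lemma compact_sub_super_incl {X : Type} (d : X -> X -> R) m n phi (K1 K2 : X -> Prop) :
  is_metric d -> matkowski_GIFS d m n phi ->
  mcompact d K1 -> nonempty K1 -> mcompact d K2 -> nonempty K2 ->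
  (forall x, K1 x -> hutchinson m n phi K1 x) -> (forall x, hutchinson m n phi K2 x -> K2 x) ->
  forall x, K1 x -> K2 x.
Proof.
  intros Hd HG HK1 HK1ne HK2 HK2ne Hsub Hsuper x Hx.
  refine (uniformly_contractive_incl d m n phi unit (fun _ => K1) (fun _ => K2) Hd
            (matkowski_GIFS_uniformly_contractive d m n phi Hd HG) _
            (fun _ _ _ => compact_nearest_point d Hd K2 HK2 HK2ne) _ tt x Hx).
  - intros _ y Hy. destruct (Hsub y Hy) as (j & t & Hj & Ht & Hjt).
    exists j, t, tt. repeat split; try assumption.
    intros s Hs. apply Hsuper. now exists j, s.
  - destruct (compact_dist_bounded d Hd K1 K2 HK1 HK2 HK1ne) as [M HM].
    exists M. intros _. exact HM.
Qed.

Theorem mainTheorem15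
  (X : Type) (d : X -> X -> R) (m n : nat)
  (phi : nat -> tup X m -> X) (rho : nat -> R -> R)
  (A : X -> Prop) (u : X -> R) :
  is_metric d -> mcomplete d -> (1 <= m)%nat ->
  matkowski_GIFS d m n phi ->
  admissible n rho ->
  is_attractor d m n phi A ->
  is_fuzzy_attractor d m n phi rho u ->
  forall (B : X -> Prop) (v : X -> R),
    nonempty B -> mcompact d B -> FX_star d v ->
    (fle (Zop m n phi rho v) v -> fle u v) /\
    ((forall x, hutchinson m n phi B x -> B x) -> forall x, A x -> B x) /\
    (fle v (Zop m n phi rho v) -> fle v u) /\
    ((forall x, B x -> hutchinson m n phi B x) -> forall x, B x -> A x).
Proof.
  intros Hd _ _ HG Hrho (HAne & HAc & HA) [Hu HZu] B v HBne HBc Hv.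
  assert (Hu_fix : forall x, u x <= Zop m n phi rho u x /\ Zop m n phi rho u x <= u x)
    by (intros x; rewrite HZu; lra).
  repeat split.
  - intros HZv. apply (fuzzy_sub_super_le d m n phi rho); auto. intros x; apply Hu_fix.
  - intros HB. apply (compact_sub_super_incl d m n phi); auto. intros x; apply HA.
  - intros HZv. apply (fuzzy_sub_super_le d m n phi rho); auto. intros x; apply Hu_fix.
  - intros HB. apply (compact_sub_super_incl d m n phi); auto. intros x; apply HA.
Qed.
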